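(* Let $\kappa>0$ be sufficiently small and define $F_1:\mathbb{R}\to\mathbb{R}$ by $F_1(0)=0$, $F_1(s)=-\frac12 s^2\log s^2$ for $0<|s|<\kappa$, and $F_1(s)=-\frac12 s^2(\log\kappa^2+3)+2\kappa|s|-\frac{\kappa^2}{2}$ for $|s|\ge\kappa$. Then $F_1$ is an N-function, and both $F_1$ and its conjugate function $\tilde F_1$ satisfy the $\Delta_2$-condition.
   Context: A continuous $\Phi:\mathbb{R}\to[0,\infty)$ is an N-function if it is convex, even, $\Phi(t)=0\iff t=0$, $\lim_{t\to0}\Phi(t)/t=0$ and $\lim_{t\to\infty}\Phi(t)/t=+\infty$. $\Phi$ satisfies the $\Delta_2$-condition if there is $k>0$ with $\Phi(2t)\le k\Phi(t)$ for all $t\ge0$. The conjugate is $\tilde\Phi(s)=\max_{t\ge0}\{st-\Phi(t)\}$, $s\ge 0$. *)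

From HB Require Import structures.
From mathcomp Require Import all_boot all_order all_algebra.
From mathcomp Require Import all_classical all_reals all_analysis.
Set Implicit Arguments. Unset Strict Implicit. Unset Printing Implicit Defensive.
Import Order.TTheory GRing.Theory Num.Theory.
Import numFieldNormedType.Exports.
Local Open Scope classical_set_scope.
Local Open Scope ring_scope.

Definition convexR {R : realType} (Phi : R -> R) : Prop :=
  forall (x y l : R), 0 <= l -> l <= 1 ->
    Phi (l * x + (1 - l) * y) <= l * Phi x + (1 - l) * Phi y.

Definition N_function {R : realType} (Phi : R -> R) : Prop :=
  continuous Phi /\
  (forall t, 0 <= Phi t) /\
  convexR Phi /\
  (forall t, Phi (- t) = Phi t) /\
  (forall t, Phi t = 0 <-> t = 0) /\
  ((fun t => Phi t / t) @ 0^' --> (0 : R)) /\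
  ((fun t => Phi t / t) @ +oo --> +oo).

Definition Delta2 {R : realType} (Phi : R -> R) : Prop :=
  exists k : R, 0 < k /\ forall t, 0 <= t -> Phi (2 * t) <= k * Phi t.

(* Conjugate function: Phi~(s) = max_{t >= 0} (s t - Phi t), written as the
   supremum (the max exists for N-functions). Only used for s >= 0. *)
Definition conjugate {R : realType} (Phi : R -> R) (s : R) : R :=
  sup [set s * t - Phi t | t in [set t : R | 0 <= t]].

Definition F1 {R : realType} (kappa : R) (s : R) : R :=
  if s == 0 then 0
  else if `|s| < kappa then - (1/2) * s ^+ 2 * ln (s ^+ 2)
  else - (1/2) * s ^+ 2 * (ln (kappa ^+ 2) + 3) + 2 * kappa * `|s| - kappa ^+ 2 / 2.

(* Write F1(s) = g(|s|), where g(s) = -s^2 ln s on [0, kappa) and, beyond kappa,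
   g is the quadratic that agrees with -s^2 ln s to first order at kappa.  For
   ln kappa <= -6 each piece lies above its tangent lines (-s^2 ln s is convex
   where ln s < -3/2), and since the pieces match to first order at kappa, so
   does g on [0, oo).  As g' >= 0, s |-> sg s * g'(|s|) is then a subgradient
   of F1 on the whole line, which gives convexity and continuity.  The growth
   conditions come from |s ln s| <= 2 sqrt |s| near 0 and F1(t) >= t^2 - kappa^2,
   and Delta_2 for the conjugate from the dilation bound F1(4u) >= 8 F1(u). *)

From HB Require Import structures.
From mathcomp Require Import all_boot all_order all_algebra.
From mathcomp Require Import all_classical all_reals all_analysis.
From mathcomp Require Import ring lra.
Import Order.TTheory GRing.Theory Num.Theory.
Import numFieldNormedType.Exports.
Local Open Scope classical_set_scope.
Local Open Scope ring_scope.

Lemma ln_le_sub1 {R : realType} {x : R} : 0 < x -> ln x <= x - 1.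
Proof.
by move=> x0; have := @le_ln1Dx R (x - 1); rewrite [1 + _]addrC subrK; apply; lra.
Qed.

Lemma mul_lnB_le {R : realType} {x p : R} : 0 < x -> 0 < p ->
  p * (ln x - ln p) <= x - p.
Proof.
move=> x0 p0; rewrite -ln_div ?posrE //.
have -> : x - p = p * (x / p - 1) by field; rewrite gt_eqF.
by apply: (ler_wpM2l (ltW p0)); apply: ln_le_sub1; apply: divr_gt0.
Qed.

Lemma oppr_mul_ln_le_sqrt {R : realType} {p : R} : 0 < p ->
  - (p * ln p) <= 2 * Num.sqrt p.
Proof.
move=> p0; set r := Num.sqrt p.
have r0 : 0 < r by rewrite sqrtr_gt0.
have pE : p = r ^+ 2 by rewrite sqr_sqrtr // ltW.
have rV0 : 0 < r^-1 by rewrite invr_gt0.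
have := ln_sublinear rV0; rewrite lnV ?posrE // => lnr.
have := ler_wpM2l (ltW r0) (ltW lnr); rewrite mulrV ?unitfE ?gt_eqF //.
by rewrite pE lnXn // => ?; nra.
Qed.

Lemma tangent_slope_le {R : realFieldType} {f d : R -> R} {x y : R} : x <= y ->
  f x + d x * (y - x) <= f y -> f y + d y * (x - y) <= f x -> d x <= d y.
Proof.
rewrite le_eqVlt => /predU1P[-> //|lt_xy] Hxy Hyx.
have : (d x - d y) * (y - x) <= 0 by lra.
by rewrite pmulr_lle0 ?subr_gt0 // subr_le0.
Qed.

Section Subgradient.
Context {R : realType} {f d : R -> R}.
Hypothesis subgradient : forall x y, f x + d x * (y - x) <= f y.

Lemma nondecreasing_subgradient : {homo d : x y / x <= y}.
Proof. by move=> x y xy; apply: tangent_slope_le xy _ _; apply: subgradient. Qed.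

Lemma convexR_subgradient : convexR f.
Proof.
move=> x y l l0 l1; set p := l * x + (1 - l) * y.
have l1' : 0 <= 1 - l by rewrite subr_ge0.
have Hx := ler_wpM2l l0 (subgradient p x).
have Hy := ler_wpM2l l1' (subgradient p y).
have -> : f p = l * (f p + d p * (x - p)) + (1 - l) * (f p + d p * (y - p)).
  by rewrite /p; ring.
exact: lerD.
Qed.

Lemma continuous_subgradient : continuous f.
Proof.
move=> p; set B := `|d (p - 1)| + `|d (p + 1)|.
have dB y : `|y - p| <= 1 -> `|d y| <= B.
  rewrite ler_norml => /andP[ly uy].
  have /nondecreasing_subgradient lo : p - 1 <= y by lra.
  have /nondecreasing_subgradient hi : y <= p + 1 by lra.
  have := ler_norm (d (p - 1)); have := ler_norm (d (p + 1)).
  have := ler_norm (- d (p - 1)); have := ler_norm (- d (p + 1)).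
  rewrite !normrN ler_norml /B => *; apply/andP; split; lra.
have lipschitz_at_p : \forall y \near p,
    f p - B * `|y - p| <= f y <= f p + B * `|y - p|.
  near=> y; have yp : `|y - p| <= 1.
    by near: y; apply/nbhs_normP; exists 1 => //= z; rewrite distrC /= => /ltW.
  have Bp : `|d p| <= B by apply: dB; rewrite subrr normr0.
  have := ler_wpM2r (normr_ge0 (y - p)) (dB y yp).
  have := ler_wpM2r (normr_ge0 (y - p)) Bp.
  have := ler_norm (d y * (y - p)); have := ler_norm (- (d p * (y - p))).
  have := subgradient p y; have := subgradient y p.
  rewrite normrN !normrM => *; apply/andP; split; lra.
have cvg_bound (e : R) : (fun y => f p + e * `|y - p|) @ p --> f p.
  have : (fun y => f p + e * `|y - p|) @ p --> f p + e * `|p - p|.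
    apply: cvgD; first exact: cvg_cst.
    apply: cvgM; first exact: cvg_cst.
    by apply: cvg_norm; apply: cvgB; [exact: cvg_id | exact: cvg_cst].
  by rewrite subrr normr0 mulr0 addr0.
apply: (squeeze_cvgr lipschitz_at_p); last exact: cvg_bound.
by under [X in X @ _ --> _]eq_fun do rewrite -mulNr; exact: cvg_bound.
Unshelve. all: by end_near.
Qed.

End Subgradient.

Definition piecewise {R : realFieldType} (c : R) (w1 w2 : R -> R) s :=
  if s < c then w1 s else w2 s.

Section PiecewiseTangent.
Context {R : realFieldType} {a c : R} {u du v dv : R -> R}.
Hypothesis u_tangent : forall x p, a <= x <= c -> a <= p <= c ->
  u p + du p * (x - p) <= u x.
Hypothesis v_tangent : forall x p, c <= x -> c <= p ->
  v p + dv p * (x - p) <= v x.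
Hypotheses (uv_c : u c = v c) (duv_c : du c = dv c).

Lemma piecewise_tangent x p : a <= x -> a <= p ->
  piecewise c u v p + piecewise c du dv p * (x - p) <= piecewise c u v x.
Proof.
rewrite /piecewise => ax ap; case: (ltP p c) => pc; case: (ltP x c) => xc.
- by apply: u_tangent; rewrite ?ax ?ap ltW.
- have pc' : a <= p <= c by rewrite ap ltW.
  have cc : a <= c <= c by rewrite lexx (le_trans ap (ltW pc)).
  have dpc : du p <= du c.
    by apply: (tangent_slope_le (ltW pc)); apply: u_tangent.
  have := u_tangent _ _ cc pc'; have := v_tangent _ _ xc (lexx c).
  have : 0 <= (du c - du p) * (x - c) by apply: mulr_ge0; rewrite subr_ge0.
  rewrite uv_c duv_c; lra.
- have xc' : a <= x <= c by rewrite ax ltW.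
  have cc : a <= c <= c by rewrite lexx (le_trans ax (ltW xc)).
  have dcp : dv c <= dv p by apply: (tangent_slope_le pc); apply: v_tangent.
  have := v_tangent _ _ (lexx c) pc; have := u_tangent _ _ xc' cc.
  have : 0 <= (dv p - dv c) * (c - x) by apply: mulr_ge0; rewrite subr_ge0 // ltW.
  rewrite uv_c duv_c; lra.
- exact: v_tangent.
Qed.

End PiecewiseTangent.

Lemma subgradient_norm {R : realFieldType} (g dg : R -> R) :
  (forall x p, 0 <= x -> 0 <= p -> g p + dg p * (x - p) <= g x) ->
  (forall p, 0 <= p -> 0 <= dg p) ->
  forall x p, g `|p| + Num.sg p * dg `|p| * (x - p) <= g `|x|.
Proof.
move=> g_tangent dg_ge0 x p.
have := g_tangent _ _ (normr_ge0 x) (normr_ge0 p).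
have := dg_ge0 _ (normr_ge0 p).
have := ler_norm x; have := ler_norm (- x); rewrite normrN.
by case: sgrP => [->|p0|p0]; rewrite ?(gtr0_norm p0) ?(ltr0_norm p0) => *; nra.
Qed.

Section QuadraticMinorant.
Context {R : realType} {Phi : R -> R} {a b : R}.
Hypothesis a_gt0 : 0 < a.
Hypothesis quadratic_minorant : forall t, 0 <= t -> a * t ^+ 2 - b <= Phi t.

Lemma conjugate_has_ubound s :
  has_ubound [set s * t - Phi t | t in [set t : R | 0 <= t]].
Proof.
exists (s ^+ 2 / (4 * a) + b) => _ [t /= t0 <-].
have := quadratic_minorant _ t0.
have : 0 <= (2 * a * t - s) ^+ 2 / (4 * a).
  by rewrite divr_ge0 ?sqr_ge0 ?mulr_ge0 ?ltW.
have -> : (2 * a * t - s) ^+ 2 / (4 * a) = a * t ^+ 2 - s * t + s ^+ 2 / (4 * a).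
  by field; rewrite gt_eqF.
lra.
Qed.

Lemma Delta2_conjugate l : 0 < l ->
  (forall u, 0 <= u -> 2 * l * Phi u <= Phi (l * u)) -> Delta2 (conjugate Phi).
Proof.
move=> l_gt0 dilation; exists (2 * l); split => [|s s0]; first by rewrite mulr_gt0.
apply: ge_sup; first by exists (2 * s * 0 - Phi 0); exists 0 => /=.
move=> _ [t /= t0 <-].
have u0 : 0 <= t / l by rewrite divr_ge0 // ltW.
have tE : t = l * (t / l) by rewrite mulrCA divff ?mulr1 // gt_eqF.
have := ub_le_sup (conjugate_has_ubound s) (ex_intro2 _ _ (t / l) u0 erefl).
have := dilation _ u0; rewrite -tE /conjugate.
have -> : 2 * s * t = 2 * l * (s * (t / l)) by rewrite tE; field; rewrite gt_eqF.
move=> *; nra.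
Qed.

Lemma superlinear_quadratic_minorant : (fun t => Phi t / t) @ +oo --> +oo.
Proof.
apply/cvgryPge => A; near=> t.
have t1 : 1 <= t by near: t; apply: nbhs_pinfty_ge.
have tA : (A + `|b|) / a <= t by near: t; apply: nbhs_pinfty_ge; exact: num_real.
rewrite ler_pdivlMr ?(lt_le_trans ltr01) //.
have := quadratic_minorant _ (le_trans ler01 t1).
rewrite ler_pdivrMr // in tA.
have t0 : 0 <= t by rewrite (le_trans ler01).
have := ler_wpM2l t0 tA; have := ler_wpM2l (normr_ge0 b) t1.
have := ler_norm b; lra.
Unshelve. all: by end_near.
Qed.

End QuadraticMinorant.

Section F1.
Variables (R : realType) (k : R).
Hypotheses (k_gt0 : 0 < k) (ln_k : ln k <= -6).

(* The factor s ^+ 2 makes F1_inner 0 = 0 whatever the junk value ln 0. *)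
Definition F1_inner (s : R) := - s ^+ 2 * ln s.
Definition dF1_inner (s : R) := - 2 * s * ln s - s.
Definition F1_coef := - ln k - 3 / 2.
Definition F1_outer s := F1_coef * s ^+ 2 + 2 * k * s - k ^+ 2 / 2.
Definition dF1_outer s := 2 * F1_coef * s + 2 * k.

Definition F1_profile := piecewise k F1_inner F1_outer.
Definition dF1_profile := piecewise k dF1_inner dF1_outer.

Lemma ln_le_k {s} : 0 < s -> s <= k -> ln s <= -6.
Proof. by move=> s0 sk; apply: le_trans ln_k; rewrite ler_ln ?posrE // (lt_le_trans s0). Qed.

Lemma F1_coef_ge : 9 / 2 <= F1_coef.
Proof. by have := ln_k; rewrite /F1_coef; lra. Qed.

Lemma F1_inner_tangent x p : 0 <= x <= k -> 0 <= p <= k ->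
  F1_inner p + dF1_inner p * (x - p) <= F1_inner x.
Proof.
rewrite /F1_inner /dF1_inner.
move=> /andP[+ xk] /andP[+ pk]; rewrite !le0r => /predU1P[->|x0] /predU1P[->|p0].
- by rewrite subrr mulr0 addr0.
- by have := ln_le_k p0 pk; have := exprn_gt0 2 p0; rewrite !(expr0n, mul0r, oppr0); nra.
- have := ln_le_k x0 xk; have := exprn_gt0 2 x0.
  by rewrite !(expr0n, mul0r, oppr0, mulr0, subr0, addr0); nra.
have lx := ln_le_k x0 xk; have lp := ln_le_k p0 pk; have log_gap := mul_lnB_le x0 p0.
case: (leP p x) => px.
- have curv : (x - p) ^+ 2 * (ln x + 2) <= 0.
    by apply: mulr_ge0_le0; [exact: sqr_ge0 | lra].
  have : (2 * x - p) * (p * (ln x - ln p)) <= (2 * x - p) * (x - p).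
    by apply: ler_wpM2l => //; lra.
  nra.
- have curv : p * ((x - p) ^+ 2 * (ln p + 2)) <= 0.
    by apply: mulr_ge0_le0; [lra | apply: mulr_ge0_le0; [exact: sqr_ge0 | lra]].
  have : x ^+ 2 * (p * (ln x - ln p)) <= x ^+ 2 * (x - p).
    by apply: ler_wpM2l => //; exact: sqr_ge0.
  have : (x - p) ^+ 2 * (x - p) <= 0.
    by apply: mulr_ge0_le0; [exact: sqr_ge0 | lra].
  move=> *; suff : 0 <= p * (- x ^+ 2 * ln x - (- p ^+ 2 * ln p + (- 2 * p * ln p - p) * (x - p))).
    by rewrite pmulr_rge0 //; lra.
  nra.
Qed.

Lemma F1_outer_tangent x p : F1_outer p + dF1_outer p * (x - p) <= F1_outer x.
Proof.
have : 0 <= F1_coef * (x - p) ^+ 2.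
  by rewrite mulr_ge0 ?sqr_ge0 // (le_trans _ F1_coef_ge).
rewrite /F1_outer /dF1_outer; nra.
Qed.

Lemma F1_profile_tangent x p : 0 <= x -> 0 <= p ->
  F1_profile p + dF1_profile p * (x - p) <= F1_profile x.
Proof.
apply: piecewise_tangent.
- exact: F1_inner_tangent.
- by move=> {}x {}p _ _; exact: F1_outer_tangent.
- by rewrite /F1_inner /F1_outer /F1_coef; field.
- by rewrite /dF1_inner /dF1_outer /F1_coef; field.
Qed.

Lemma dF1_profile_ge0 p : 0 <= p -> 0 <= dF1_profile p.
Proof.
move=> p0; have := F1_coef_ge; have := k_gt0.
rewrite /dF1_profile /piecewise /dF1_inner /dF1_outer.
case: (ltP p k) => [pk|kp] *; last by nra.
move: p0; rewrite le0r => /predU1P[->|p_gt0]; first by rewrite !(mulr0, mul0r) subr0.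
by have := ln_le_k p_gt0 (ltW pk); nra.
Qed.

Lemma F1_profile0 : F1_profile 0 = 0.
Proof. by rewrite /F1_profile /piecewise k_gt0 /F1_inner expr2 !mul0r oppr0 mul0r. Qed.

Lemma F1E s : F1 k s = F1_profile `|s|.
Proof.
rewrite /F1; have [->|s_neq0] := eqVneq s 0; first by rewrite normr0 F1_profile0.
rewrite /F1_profile /piecewise.
have s0 : 0 < `|s| by rewrite normr_gt0.
rewrite -(real_normK (num_real s)) !lnXn // /F1_inner /F1_outer /F1_coef.
by case: ltP => _; rewrite !mulr2n; field.
Qed.

Definition dF1 s := Num.sg s * dF1_profile `|s|.

Lemma F1_subgradient x y : F1 k x + dF1 x * (y - x) <= F1 k y.
Proof.
rewrite !F1E /dF1; apply: subgradient_norm; last exact: dF1_profile_ge0.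
exact: F1_profile_tangent.
Qed.

Lemma F1_ge0 t : 0 <= F1 k t.
Proof.
have := F1_subgradient 0 t.
by rewrite /dF1 sgr0 !mul0r addr0 {1}/F1 eqxx.
Qed.

Lemma F1_profile_gt0 s : 0 < s -> 0 < F1_profile s.
Proof.
move=> s0; have := F1_coef_ge; have := k_gt0.
rewrite /F1_profile /piecewise /F1_inner /F1_outer.
case: (ltP s k) => [sk|ks] *; last by nra.
by have := ln_le_k s0 (ltW sk); have := exprn_gt0 2 s0; nra.
Qed.

Lemma F1_eq0 t : F1 k t = 0 <-> t = 0.
Proof.
split => [|->]; last by rewrite /F1 eqxx.
apply: contra_eq => t_neq0; rewrite F1E gt_eqF //.
by apply: F1_profile_gt0; rewrite normr_gt0.
Qed.

(* The factor 1 is the coefficient [a] of section [QuadraticMinorant]. *)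
Lemma F1_quadratic_minorant t : 0 <= t -> 1 * t ^+ 2 - k ^+ 2 <= F1 k t.
Proof.
move=> t0; rewrite mul1r; case: (ltP t k) => [tk|kt].
  by have := F1_ge0 t; have := k_gt0; nra.
rewrite F1E ger0_norm // /F1_profile /piecewise ltNge kt /= /F1_outer.
by have := F1_coef_ge; have := k_gt0; nra.
Qed.

Lemma F1_div_cvg0 : (fun t => F1 k t / t) @ 0^' --> 0.
Proof.
have bound : \forall t \near 0^',
    - (2 * Num.sqrt `|t|) <= F1 k t / t <= 2 * Num.sqrt `|t|.
  near=> t.
  have t_neq0 : t != 0 by near: t; exact: nbhs_dnbhs_neq.
  have tk : `|t| < k.
    near: t; apply: nbhs_dnbhs; apply/nbhs_normP.
    by exists k => //= z; rewrite /ball_ /= sub0r normrN.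
  have t0 : 0 < `|t| by rewrite normr_gt0.
  rewrite -ler_norml F1E /F1_profile /piecewise tk /F1_inner normrM normfV.
  rewrite ler_pdivrMr // ger0_norm; last first.
    by have := ln_le_k t0 (ltW tk); have := exprn_gt0 2 t0; nra.
  by have := ler_wpM2r (ltW t0) (oppr_mul_ln_le_sqrt t0); lra.
have sqrt_cvg0 : (fun t : R => 2 * Num.sqrt `|t|) @ 0^' --> (0 : R).
  have : (fun t : R => 2 * Num.sqrt `|t|) @ 0 --> 2 * Num.sqrt `|0 : R|.
    apply: cvgM; first exact: cvg_cst.
    exact: (continuous_comp (@norm_continuous _ R^o 0) (@sqrt_continuous R _)).
  by rewrite normr0 sqrtr0 mulr0; exact: cvg_within_filter.
apply: (squeeze_cvgr bound); last exact: sqrt_cvg0.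
by have := cvgN sqrt_cvg0; rewrite oppr0; apply.
Unshelve. all: by end_near.
Qed.

Lemma F1_profile_Delta2 t : 0 <= t -> F1_profile (2 * t) <= 5 * F1_profile t.
Proof.
rewrite le0r => /predU1P[->|t0]; first by rewrite mulr0 F1_profile0 mulr0.
have := F1_coef_ge; have := k_gt0; have := exprn_gt0 2 t0.
rewrite /F1_profile /piecewise /F1_inner /F1_outer => *.
case: (ltP (2 * t) k) => k2t.
- have tk : t < k by lra.
  have := ln_le_k t0 (ltW tk); have : 0 <= ln (2 : R) by rewrite ln_ge0 // ler1n.
  by rewrite tk lnM ?posrE //; nra.
- case: (ltP t k) => [tk|kt]; last by nra.
  have ln_tk : ln t <= ln k by rewrite ler_ln ?posrE // ltW.
  have : k * t <= 2 * t * t by nra.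
  have : 0 <= t ^+ 2 * (ln k - ln t) by rewrite mulr_ge0 ?sqr_ge0 ?subr_ge0.
  by have := ln_k; rewrite /F1_coef; nra.
Qed.

Lemma F1_profile_dilation u : 0 <= u -> 8 * F1_profile u <= F1_profile (4 * u).
Proof.
rewrite le0r => /predU1P[->|u0]; first by rewrite mulr0 F1_profile0 mulr0.
have := F1_coef_ge; have := k_gt0; have := exprn_gt0 2 u0.
have : ln (4 : R) <= 3 by have := ln_le_sub1 (ltr0n R 4); lra.
rewrite /F1_profile /piecewise /F1_inner /F1_outer => *.
case: (ltP (4 * u) k) => k4u.
- have uk : u < k by lra.
  by have := ln_le_k u0 (ltW uk); rewrite uk lnM ?posrE //; nra.
- case: (ltP u k) => [uk|ku]; last by nra.
  have ln_k4u : ln k <= ln 4 + ln u by rewrite -lnM ?posrE // ler_ln ?posrE //; lra.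
  have : k * k <= 4 * u * k by nra.
  have : 0 <= u ^+ 2 * (ln u - ln k + 3) by rewrite mulr_ge0 ?sqr_ge0 //; lra.
  by have := ln_k; rewrite /F1_coef; nra.
Qed.

Lemma N_function_F1 : N_function (F1 k).
Proof.
split; first exact: continuous_subgradient F1_subgradient.
split; first exact: F1_ge0.
split; first exact: convexR_subgradient F1_subgradient.
split; first by move=> t; rewrite !F1E normrN.
split; first exact: F1_eq0.
split; first exact: F1_div_cvg0.
exact: superlinear_quadratic_minorant ltr01 F1_quadratic_minorant.
Qed.

Lemma Delta2_F1 : Delta2 (F1 k).
Proof.
exists 5; split => // t t0.
by rewrite !F1E !ger0_norm ?mulr_ge0 //; apply: F1_profile_Delta2.
Qed.

Lemma Delta2_conjugate_F1 : Delta2 (conjugate (F1 k)).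
Proof.
apply: (Delta2_conjugate ltr01 F1_quadratic_minorant 4 (ltr0n R 4)) => u u0.
by rewrite !F1E !ger0_norm ?mulr_ge0 // -natrM; apply: F1_profile_dilation.
Qed.

End F1.

Theorem proposition3p1 (R : realType) :
  exists kappa0 : R, 0 < kappa0 /\
    forall kappa : R, 0 < kappa -> kappa < kappa0 ->
      [/\ N_function (F1 kappa), Delta2 (F1 kappa) & Delta2 (conjugate (F1 kappa))].
Proof.
exists (expR (-6)); split => [|k k_gt0 k_lt]; first exact: expR_gt0.
have ln_k : ln k <= -6 by rewrite -ler_expR lnK ?posrE // ltW.
by split; [exact: N_function_F1 | exact: Delta2_F1 | exact: Delta2_conjugate_F1].
Qed.
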